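(* For positive integers $m$ and $n$, \begin{align*} \overline{{m+n \brack n}}_{q,t} &= \overline{{m+n -1\brack n-1}}_{q,t} +q^n \overline{{m+n-1 \brack n}}_{q,t} + tq^n \overline{ {m+n-2 \brack n-1}}_{q,t},\\ \overline{{m+n \brack n}}_{q,t} &= \overline{{m+n -1\brack n}}_{q,t} +q^m \overline{{m+n-1 \brack n-1}}_{q,t} + tq^m \overline{{m+n-2 \brack n-1}}_{q,t}. \end{align*}
   Context: An overpartition is a partition in which the last occurrence of each distinct part size may be overlined; its weight $|\lambda|$ is the sum of its parts. For integers $0\le b\le a$, $\overline{{a \brack b}}_{q,t}=\sum_{\lambda} t^{\#_o(\lambda)} q^{|\lambda|}$, the sum over all overpartitions $\lambda$ with largest part at most $a-b$ and at most $b$ parts, $\#_o(\lambda)$ being the number of overlined parts. *)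

From mathcomp Require Import all_boot all_order all_algebra.
Set Implicit Arguments. Unset Strict Implicit. Unset Printing Implicit Defensive.
Import GRing.Theory.
Local Open Scope ring_scope.

(* An overpartition is represented as a sequence of (part, overlined?) pairs,
   listed in nonincreasing order of parts.  Parts are positive; an entry may
   be overlined only if it is the last occurrence of its part size (i.e. the
   next entry, if any, has a different (smaller) part). *)
Fixpoint overline_ok (s : seq (nat * bool)) : bool :=
  match s with
  | x :: ((y :: _) as r) => (x.2 ==> (y.1 != x.1)) && overline_ok r
  | _ => true
  end.

Definition is_overpartition (s : seq (nat * bool)) : bool :=
  [&& all (fun p => 0 < p.1)%N s,
      sorted (fun x y => y.1 <= x.1)%N s & overline_ok s].

Definition ov_weight (s : seq (nat * bool)) : nat := sumn (map fst s).
Definition ov_noverlined (s : seq (nat * bool)) : nat := count snd s.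

Definition ov_seq N j (s : j.-tuple ('I_N.+1 * bool)) : seq (nat * bool) :=
  [seq (nat_of_ord x.1, x.2) | x <- s].

(* overline{[a ; b]}_{q,t} : sum over overpartitions with largest part at most
   a - b and at most b parts (j = number of parts, j <= b), of
   t^(#overlined) q^(weight).  Intended for b <= a. *)
Definition ovbinom (R : comRingType) (q t : R) (a b : nat) : R :=
  \sum_(j < b.+1)
    \sum_(s : j.-tuple ('I_(a - b).+1 * bool) | is_overpartition (ov_seq s))
      t ^+ ov_noverlined (ov_seq s) * q ^+ ov_weight (ov_seq s).

(* Write G(N, b) for the generating function of overpartitions with parts at
   most N and at most b parts, so that ovbinom (N + b) b = G(N, b).  Sorting an
   overpartition by its first (largest) entry -- a part below N, a plain N, or
   an overlined N, after which every part is below N -- gives the second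
   identity G(N+1, b+1) = G(N, b+1) + q^(N+1) G(N+1, b) + t q^(N+1) G(N, b).
   The first identity is the conjugate recurrence.  Instead of conjugating
   overpartitions, we check that its defect obeys the recurrence above with
   zero boundary values, and therefore vanishes. *)

From mathcomp Require Import all_boot all_order all_algebra.
From mathcomp Require Import ring zify.
Set Implicit Arguments.
Unset Strict Implicit.
Unset Printing Implicit Defensive.
Import GRing.Theory.
Local Open Scope ring_scope.

Definition bounded_ov (N b : nat) (x : seq (nat * bool)) : bool :=
  [&& is_overpartition x, (size x <= b)%N & all (fun y => y.1 <= N)%N x].

Lemma is_overpartition_cons p o r : is_overpartition ((p, o) :: r) =
  [&& (0 < p)%N, is_overpartition r &
      (if r is y :: _ then (y.1 <= p)%N && (o ==> (y.1 != p)) else true)].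
Proof.
rewrite /is_overpartition; case: r => [|[y1 y2] r] /=; first by rewrite andbT.
by case: (0 < p)%N (y1 <= p)%N (o ==> _) => [] [] []; rewrite /= ?andbF ?andbT.
Qed.

Lemma overpartition_all_le_head y r k : is_overpartition (y :: r) ->
  (y.1 <= k)%N && all (fun z => z.1 <= k)%N r = (y.1 <= k)%N.
Proof.
case/and3P=> _ /= sorted_yr _; apply/andP/idP => [[] //|le_yk]; split=> //.
have le_trans_rev : transitive (fun x z : nat * bool => z.1 <= x.1)%N.
  by move=> u v w /= le_uv le_wu; exact: leq_trans le_wu le_uv.
by apply/allP=> z /(allP (order_path_min le_trans_rev sorted_yr)) /leq_trans; apply.
Qed.

(* The boolean [o] counts as 1: after an overlined p all remaining parts are below p. *)
Lemma bounded_ov_cons N b p (o : bool) r :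
  bounded_ov N b.+1 ((p, o) :: r) =
  [&& (0 < p)%N, (p <= N)%N & bounded_ov (p - o) b r].
Proof.
rewrite /bounded_ov is_overpartition_cons /= ltnS.
case: (ltnP 0 p) => //= p_gt0; case ov_r: (is_overpartition r) => /=; last first.
  by rewrite !andbF.
case: r ov_r => [|y r] ov_r /=; first by rewrite !andbT.
rewrite !overpartition_all_le_head //.
by case: o; apply/idP/idP; lia.
Qed.

Fixpoint ovparts (N b : nat) : seq (seq (nat * bool)) :=
  match N with
  | 0 => [:: [::]]
  | N'.+1 => (fix ovparts_N b := match b with
               | 0 => [:: [::]]
               | b'.+1 => ovparts N' b ++ map (cons (N, false)) (ovparts_N b')
                            ++ map (cons (N, true)) (ovparts N' b')
               end) b
  end.

Lemma ovparts0n b : ovparts 0 b = [:: [::]]. Proof. by []. Qed.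
Lemma ovpartsn0 N : ovparts N 0 = [:: [::]]. Proof. by case: N. Qed.
Lemma ovpartsSS N b : ovparts N.+1 b.+1 =
  ovparts N b.+1 ++ map (cons (N.+1, false)) (ovparts N.+1 b)
                 ++ map (cons (N.+1, true)) (ovparts N b).
Proof. by []. Qed.

Lemma mem_map_cons (T : eqType) (c y : T) r s :
  (y :: r \in map (cons c) s) = (y == c) && (r \in s).
Proof.
apply/mapP/andP => [[z zs [-> ->]]|[/eqP -> rs]]; first by rewrite eqxx.
by exists r.
Qed.

Lemma mem_ovparts N b x : (x \in ovparts N b) = bounded_ov N b x.
Proof.
elim: N b x => [|N IHN] b x.
  rewrite ovparts0n inE; case: x => [|[p o] r] //; case: b => [|b].
    by rewrite /bounded_ov [size _]/= ltn0 andbF.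
  by rewrite bounded_ov_cons; case: p.
elim: b x => [|b IHb] [|[p o] r] //.
- by rewrite ovpartsn0 /bounded_ov [size _]/= ltn0 andbF.
- by rewrite ovpartsSS !mem_cat IHN.
rewrite ovpartsSS !mem_cat !mem_map_cons IHN IHb IHN !bounded_ov_cons !xpair_eqE.
case: (ltngtP p N.+1) => [lt_pN|lt_Np|->] /=; rewrite ?andbF ?orbF; try lia.
by rewrite ltnn; case: o; rewrite ?subn0 ?subn1 /= ?orbF.
Qed.

Lemma uniq_ovparts N b : uniq (ovparts N b).
Proof.
elim: N b => [|N IHN] // b; elim: b => [|b IHb] //.
have cons_inj (c : nat * bool) : injective (cons c) by move=> x y [].
rewrite ovpartsSS !cat_uniq !map_inj_uniq ?IHN ?IHb //= andbT.
apply/andP; split.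
  by apply/hasPn => x; rewrite mem_cat => /orP[] /mapP[r _ ->];
     rewrite mem_ovparts /bounded_ov /= ltnn !andbF.
by apply/hasPn => x /mapP[r _ ->]; apply/negP => /mapP[r' _ []].
Qed.

Section GeneratingFunction.
Variables (R : comRingType) (q t : R).

Definition ov_monomial (x : seq (nat * bool)) : R :=
  t ^+ ov_noverlined x * q ^+ ov_weight x.

Definition ovgen (N b : nat) : R := \sum_(x <- ovparts N b) ov_monomial x.

Lemma ov_monomial_cons p (o : bool) x :
  ov_monomial ((p, o) :: x) = t ^+ o * q ^+ p * ov_monomial x.
Proof.
by rewrite /ov_monomial /ov_noverlined /ov_weight /= !exprD mulrACA.
Qed.

Lemma ovgen0n b : ovgen 0 b = 1.
Proof. by rewrite /ovgen ovparts0n big_seq1 /ov_monomial !expr0 mulr1. Qed.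

Lemma ovgenn0 N : ovgen N 0 = 1.
Proof. by rewrite /ovgen ovpartsn0 big_seq1 /ov_monomial !expr0 mulr1. Qed.

Lemma ovgenSS N b : ovgen N.+1 b.+1 =
  ovgen N b.+1 + q ^+ N.+1 * ovgen N.+1 b + t * q ^+ N.+1 * ovgen N b.
Proof.
rewrite /ovgen ovpartsSS !big_cat !big_map !mulr_sumr /= addrA.
by congr (_ + _ + _); apply: eq_bigr => x _; rewrite ov_monomial_cons ?mul1r.
Qed.

End GeneratingFunction.

Lemma ov_seq_inj N j : injective (@ov_seq N j).
Proof.
move=> s1 s2 /inj_map eq_s; apply/val_inj/eq_s.
by move=> [a1 o1] [a2 o2] [/ord_inj -> ->].
Qed.

Lemma ov_seq_onto N j x : size x = j -> all (fun y => y.1 <= N)%N x ->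
  exists s : j.-tuple ('I_N.+1 * bool), ov_seq s = x.
Proof.
move=> size_x /allP x_le_N.
set s := [seq ((inord y.1 : 'I_N.+1), y.2) | y <- x].
have size_s : size s == j by rewrite size_map size_x.
exists (Tuple size_s); rewrite /ov_seq /= -map_comp -[RHS]map_id.
by apply/eq_in_map => -[p o] /x_le_N le_pN /=; rewrite inordK.
Qed.

Lemma sum_ov_tuples (V : nmodType) N b (j : 'I_b.+1) (F : seq (nat * bool) -> V) :
  \sum_(s : j.-tuple ('I_N.+1 * bool) | is_overpartition (ov_seq s)) F (ov_seq s)
  = \sum_(x <- ovparts N b | size x == j) F x.
Proof.
rewrite -big_filter -(big_map (@ov_seq N j) xpredT) -[RHS]big_filter.
apply/perm_big/uniq_perm.
- by rewrite map_inj_uniq ?filter_uniq ?index_enum_uniq //; apply: ov_seq_inj.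
- by rewrite filter_uniq ?uniq_ovparts.
move=> x; rewrite mem_filter mem_ovparts /bounded_ov; apply/mapP/idP.
  move=> [s]; rewrite mem_filter => /andP[ov_s _] ->.
  rewrite ov_s /ov_seq size_map size_tuple eqxx -ltnS ltn_ord /=.
  by apply/allP => _ /mapP[y _ ->] /=; rewrite -ltnS ltn_ord.
case/and4P=> /eqP size_x ov_x _ /(ov_seq_onto size_x)[s eq_s].
by exists s; rewrite // mem_filter eq_s ov_x mem_index_enum.
Qed.

Lemma ovbinomE (R : comRingType) (q t : R) a b :
  ovbinom q t a b = ovgen q t (a - b) b.
Proof.
rewrite /ovbinom /ovgen.
under eq_bigr => j _ do rewrite (sum_ov_tuples _ _ (ov_monomial q t)).
rewrite (exchange_big_dep xpredT) //=; apply: eq_big_seq => x.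
rewrite mem_ovparts => /and3P[_ size_x _].
by rewrite (big_pred1 (Ordinal (size_x : size x < b.+1)%N)).
Qed.

Section ConjugateRecurrence.
Variables (R : comRingType) (q t : R) (G : nat -> nat -> R).
Hypothesis G0n : forall n, G 0 n = 1.
Hypothesis Gn0 : forall m, G m 0 = 1.
Hypothesis GSS : forall m n,
  G m.+1 n.+1 = G m n.+1 + q ^+ m.+1 * G m.+1 n + t * q ^+ m.+1 * G m n.

Definition conj_defect m n : R :=
  G m.+1 n.+1 - (G m.+1 n + q ^+ n.+1 * G m n.+1 + t * q ^+ n.+1 * G m n).

Lemma conj_defect0S n : conj_defect 0 n.+1 = q * conj_defect 0 n.
Proof. by rewrite /conj_defect !GSS !G0n !exprS; ring. Qed.

Lemma conj_defectS0 m : conj_defect m.+1 0 = conj_defect m 0.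
Proof. by rewrite /conj_defect (GSS m.+1) (GSS m) !Gn0 !exprS; ring. Qed.

Lemma conj_defectSS m n : conj_defect m.+1 n.+1 =
  conj_defect m n.+1 + q ^+ m.+2 * conj_defect m.+1 n + t * q ^+ m.+2 * conj_defect m n.
Proof.
by rewrite /conj_defect (GSS m.+1 n.+1) (GSS m.+1 n) (GSS m n.+1) (GSS m n) !exprS; ring.
Qed.

Lemma conj_defect_eq0 m n : conj_defect m n = 0.
Proof.
have defect00 : conj_defect 0 0 = 0 by rewrite /conj_defect GSS !G0n !Gn0 subrr.
elim: m n => [|m IHm] n.
  by elim: n => [|n IHn]; rewrite ?conj_defect0S ?IHn ?mulr0.
elim: n => [|n IHn]; first by rewrite conj_defectS0 IHm.
by rewrite conj_defectSS IHn !IHm !mulr0 !addr0.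
Qed.

Lemma conj_recurrence m n :
  G m.+1 n.+1 = G m.+1 n + q ^+ n.+1 * G m n.+1 + t * q ^+ n.+1 * G m n.
Proof. by apply/eqP; rewrite -subr_eq0; apply/eqP/conj_defect_eq0. Qed.

End ConjugateRecurrence.

Theorem theorem2p3 (R : comRingType) (q t : R) (m n : nat) :
  (0 < m)%N -> (0 < n)%N ->
  ovbinom q t (m + n) n =
    ovbinom q t (m + n - 1) (n - 1) + q ^+ n * ovbinom q t (m + n - 1) n
    + t * q ^+ n * ovbinom q t (m + n - 2) (n - 1)
  /\
  ovbinom q t (m + n) n =
    ovbinom q t (m + n - 1) n + q ^+ m * ovbinom q t (m + n - 1) (n - 1)
    + t * q ^+ m * ovbinom q t (m + n - 2) (n - 1).
Proof.
case: m => // m _; case: n => // n _.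
rewrite !ovbinomE !subn1 /= !addnK.
have -> : (m + n.+1 - n = m.+1)%N by lia.
have -> : (m.+1 + n.+1 - 2 - n = m)%N by lia.
split; last exact: ovgenSS.
exact: conj_recurrence (ovgen0n q t) (ovgenn0 q t) (ovgenSS q t) m n.
Qed.
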